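(* Let $X$ be a compactum, $Y$ a compactum in the Hilbert cube $I^\infty$, and $Y_1\supset Y_2\supset\cdots$ compact prism neighbourhoods of $Y$ with $\bigcap_kY_k=Y$ and inclusions $p_k:Y_{k+1}\to Y_k$. Let $T_{X,Y}$ be the rooted simplicial tree of the inverse sequence of sets $([X,Y_k],p_k^* )_{k\ge1}$, where $p_k^*[g]=[p_k\circ g]$. Then there is a bijection between the homotopy classes of approximative maps from $X$ towards $Y$ and the geodesically complete branches of $T_{X,Y}$.
   Context: A compactum is a compact metric space; a prism is a space homeomorphic to $P\times I^\infty$ with $P$ a compact polyhedron. $[X,Y_k]$ is the set of homotopy classes of continuous maps $X\to Y_k$. For an inverse sequence of sets $(S_n,r_n)$, $r_n:S_{n+1}\to S_n$, its tree is the geometric realization of the graph with vertices $\{v\}\sqcup\bigsqcup_nS_n$ and edges $\{x,r_n(x)\}$ ($x\in S_{n+1}$), $\{x,v\}$ ($x\in S_1$), edges of length 1, path metric, rooted at $v$. A geodesically complete branch is an isometric embedding $F:[0,\infty)\to T_{X,Y}$ with $F(0)=v$. An approximative map of $X$ towards $Y$ is a sequence of continuous maps $f_k:X\to Y_k$ such that for every $N$ there is $m(N)$ with $p_t\circ f_{t+1}\simeq f_t$ in $Y_N$ for all $t\ge m(N)$; two approximative maps $\{f_k\},\{g_k\}$ are homotopic if for every neighbourhood $V$ of $Y$ in $I^\infty$ there is $k_0$ with $f_k\simeq g_k$ in $V$ for all $k\ge k_0$. *)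

From HB Require Import structures.
From mathcomp Require Import all_boot all_order all_algebra.
From mathcomp Require Import all_classical all_reals all_analysis.
Import Order.TTheory GRing.Theory Num.Theory numFieldNormedType.Exports.
Set Implicit Arguments.
Unset Strict Implicit.
Unset Printing Implicit Defensive.
Local Open Scope classical_set_scope.
Local Open Scope ring_scope.

Section InverseSequenceTree.
Variable R : realType.
Variable U : Type.
(* the inverse sequence: S n (n = 0,1,2,... stands for the paper's
   S_1, S_2, S_3, ...) as subsets of an ambient type U, with bonding
   maps r n : S (n+1) -> S n *)
Variable S : nat -> set U.
Variable r : nat -> U -> U.

(* vertices: None is the root v, Some (n, x) is x in S n *)
Definition tvtx := option (nat * U).

Definition is_tvtx (a : tvtx) : Prop :=
  match a with None => True | Some (n, x) => S n x end.

Definition tadj0 (a b : tvtx) : Prop :=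
  match a, b with
  | Some (O, x), None => S O x
  | Some (Datatypes.S n, x), Some (m, y) => [/\ S n.+1 x, m = n, y = r n x & S n y]
  | _, _ => False
  end.

Definition tadj (a b : tvtx) : Prop := tadj0 a b \/ tadj0 b a.

Inductive twalk : tvtx -> tvtx -> nat -> Prop :=
| twalk0 a : twalk a a 0
| twalkS a b c m : tadj a b -> twalk b c m -> twalk a c m.+1.

(* points of the geometric realization: a vertex, or the point of the
   edge {a,b} at distance t (0<t<1) from a.  Ex a b t and Ex b a (1-t)
   denote the same point (they are at distance 0). *)
Inductive tpoint :=
| Vx of tvtx
| Ex of tvtx & tvtx & R.

Definition valid_tpoint (p : tpoint) : Prop :=
  match p with
  | Vx a => is_tvtx a
  | Ex a b t => tadj a b /\ 0 < t < 1
  end.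

Definition exit_of (p : tpoint) (u : tvtx) (e : R) : Prop :=
  match p with
  | Vx a => u = a /\ e = 0
  | Ex a b t => (u = a /\ e = t) \/ (u = b /\ e = 1 - t)
  end.

(* path metric (all edges of length 1): infimum of the lengths of the
   paths from p to q; a path either stays inside one edge or leaves the
   cell of p through an endpoint, follows an edge walk, and enters the
   cell of q through an endpoint. *)
Definition path_lengths (p q : tpoint) : set R :=
  [set d | (exists u e1 w e2 m,
              [/\ exit_of p u e1, exit_of q w e2, twalk u w m &
                  d = e1 + m%:R + e2])
        \/ (exists a b t s, p = Ex a b t /\
              ((q = Ex a b s /\ d = `|t - s|) \/
               (q = Ex b a s /\ d = `|t - (1 - s)|)))].

Definition tdist (p q : tpoint) : R := inf (path_lengths p q).

Definition troot : tpoint := Vx None.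

Definition geod_complete_branch (F : R -> tpoint) : Prop :=
  [/\ forall t, 0 <= t -> valid_tpoint (F t),
      F 0 = troot &
      forall s t, 0 <= s -> 0 <= t -> tdist (F s) (F t) = `|s - t| ].

Definition branch_eq (F G : R -> tpoint) : Prop :=
  forall t, 0 <= t -> tdist (F t) (G t) = 0.

End InverseSequenceTree.

Definition realT (R : realType) : topologicalType := Real.sort R.
Notation cube R := (prod_topology (fun _ : nat => realT R)).

Section Shape.
Variable R : realType.
Local Notation cube := (cube R).

Definition hilbert_cube : set cube := [set y | forall n, 0 <= y n <= 1].

Definition nbhd_in_cube (Y V : set cube) : Prop :=
  V `<=` hilbert_cube /\
  exists O : set cube, [/\ open O, Y `<=` O `&` hilbert_cube &
                          O `&` hilbert_cube `<=` V].

(* compact polyhedra in R^n: finite unions of (geometric) simplices *)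
Definition aff_indep n (c : seq 'rV[R]_n) : Prop :=
  forall l : nat -> R,
    \sum_(i < size c) l i = 0 -> \sum_(i < size c) l i *: c`_i = 0 ->
    forall i, (i < size c)%N -> l i = 0.

Definition simplex n (c : seq 'rV[R]_n) : set 'rV[R]_n :=
  [set x | exists l : nat -> R,
     [/\ forall i, 0 <= l i, \sum_(i < size c) l i = 1 &
         x = \sum_(i < size c) l i *: c`_i]].

Definition compact_polyhedron n (P : set 'rV[R]_n) : Prop :=
  exists s : seq (seq 'rV[R]_n),
    (forall c, c \in s -> aff_indep c) /\
    P = [set x | exists2 c, c \in s & simplex c x].

Definition homeomorphic_sets {T1 T2 : topologicalType}
  (A : set T1) (B : set T2) : Prop :=
  exists (h : T1 -> T2) (k : T2 -> T1),
    [/\ {within A, continuous h}, {within B, continuous k},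
        (forall a, A a -> B (h a)), (forall b, B b -> A (k b)) &
        ((forall a, A a -> k (h a) = a) /\ (forall b, B b -> h (k b) = b))].

Definition is_prism (A : set cube) : Prop :=
  exists n (P : set 'rV[R]_n), compact_polyhedron P /\
    homeomorphic_sets A [set p : 'rV[R]_n * cube | P p.1 /\ hilbert_cube p.2].

Variable X : topologicalType.

Definition cont_into (A : set cube) (f : X -> cube) : Prop :=
  continuous f /\ forall x, A (f x).

Definition homotopic_in (A : set cube) (f g : X -> cube) : Prop :=
  [/\ cont_into A f, cont_into A g &
   exists H : X * R -> cube,
     [/\ {within [set p : X * R | 0 <= p.2 <= 1], continuous H},
         (forall x, H (x, 0) = f x), (forall x, H (x, 1) = g x) &
         (forall x t, 0 <= t <= 1 -> A (H (x, t)))]].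

Definition homclass (A : set cube) (f : X -> cube) : set (X -> cube) :=
  [set g | homotopic_in A f g].

Definition hclasses (Yk : nat -> set cube) (k : nat) : set (set (X -> cube)) :=
  [set c | exists f, cont_into (Yk k) f /\ c = homclass (Yk k) f].

(* p_k^* [g] = [p_k o g] (p_k the inclusion Y_{k+1} -> Y_k):
   the class in Y_k of the members of c *)
Definition pstar (Yk : nat -> set cube) (k : nat) (c : set (X -> cube)) :
  set (X -> cube) :=
  [set g | exists2 f, c f & homotopic_in (Yk k) f g].

Definition approximative (Yk : nat -> set cube) (f : nat -> X -> cube) : Prop :=
  (forall k, cont_into (Yk k) (f k)) /\
  forall N, exists m, forall t, (m <= t)%N -> homotopic_in (Yk N) (f t.+1) (f t).

Definition approx_homotopic (Y : set cube) (f g : nat -> X -> cube) : Prop :=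
  forall V, nbhd_in_cube Y V ->
    exists k0, forall k, (k0 <= k)%N -> homotopic_in V (f k) (g k).

End Shape.

From HB Require Import structures.
From mathcomp Require Import all_boot all_order all_algebra.
From mathcomp Require Import all_classical all_reals all_analysis.
From mathcomp Require Import ring lra zify.
Import Order.TTheory GRing.Theory Num.Theory numFieldNormedType.Exports.
Set Implicit Arguments.
Unset Strict Implicit.
Unset Printing Implicit Defensive.
Local Open Scope classical_set_scope.
Local Open Scope ring_scope.

(* An approximative map is eventually constant up to homotopy in each [Yk N];
   the resulting classes form a thread of the inverse sequence (one vertex on
   each level, consecutive ones adjacent), and the path through a thread is a
   geodesically complete branch. Conversely a geodesically complete branch is
   parametrised by height, so it meets each level in a vertex, consecutive ones
   at distance 1 and hence adjacent: it is the path through a thread, and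
   representatives of that thread form an approximative map. Since the compact
   [Yk N] are cofinal among the neighbourhoods of [Y], two approximative maps
   are homotopic iff they define the same thread. *)

Section Homotopy.
Variables (R : realType) (X : topologicalType).

Lemma within_continuous_comp (A B : set (X * R)) (phi : X * R -> X * R)
    (H : X * R -> cube R) :
  {within A, continuous H} -> continuous phi -> (forall p, B p -> A (phi p)) ->
  {within B, continuous (H \o phi)}.
Proof.
move=> /subspace_continuousP cH cphi BA; apply/subspace_continuousP => x Bx W nW.
have nA : nbhs (phi x) [set y | A y -> W (H y)] by exact: cH _ (BA _ Bx) W nW.
apply: (@filterS _ _ _ (phi @^-1` [set y | A y -> W (H y)])) (cphi x _ nA).
by move=> y /= Ay By; exact: Ay (BA _ By).
Qed.

Lemma continuous_reparam (a b : R) :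
  continuous (fun p : X * R => (p.1, a * p.2 + b)).
Proof.
move=> [x t]; apply: (@cvg_pair _ _ _ _ (nbhs x) (nbhs (a * t + b))) => /=.
  exact: cvg_fst.
apply: (@cvg_comp _ _ _ snd (fun t => a * t + b) _ (nbhs t)); first exact: cvg_snd.
apply: (@continuousD _ _ _ (fun t => a * t) (cst b)); last exact: cvg_cst.
apply: (@continuousM _ _ (cst a) id); [exact: cvg_cst | exact: cvg_id].
Qed.

Lemma closed_strip (a b : R) : closed [set p : X * R | a <= p.2 <= b].
Proof.
have -> : [set p : X * R | a <= p.2 <= b] =
    snd @^-1` ([set t | a <= t] `&` [set t | t <= b]).
  by apply/seteqP; split => p /=; [move/andP | move=> [-> ->]].
have : continuous (@snd X R) by move=> [x t]; exact: cvg_snd.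
move/continuous_closedP; apply; apply: closedI; [exact: closed_ge | exact: closed_le].
Qed.

Lemma cont_into_sub (A B : set (cube R)) (f : X -> cube R) :
  A `<=` B -> cont_into A f -> cont_into B f.
Proof. by move=> AB [cf Af]; split=> // x; exact: AB. Qed.

Lemma homotopic_in_sub (A B : set (cube R)) (f g : X -> cube R) :
  A `<=` B -> homotopic_in A f g -> homotopic_in B f g.
Proof.
move=> AB [cf cg [H [cH H0 H1 HA]]]; split; try exact: cont_into_sub AB _.
by exists H; split=> // x t t01; exact/AB/HA.
Qed.

Lemma homotopic_in_refl (A : set (cube R)) (f : X -> cube R) :
  cont_into A f -> homotopic_in A f f.
Proof.
move=> [cf Af]; split=> //; exists (f \o fst); split=> // [|x t _]; last exact: Af.
apply: continuous_subspaceT => p; apply: continuous_comp; last exact: cf.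
exact: cvg_fst.
Qed.

Lemma homotopic_in_sym (A : set (cube R)) (f g : X -> cube R) :
  homotopic_in A f g -> homotopic_in A g f.
Proof.
move=> [cf cg [H [cH H0 H1 HA]]]; split=> //.
exists (H \o (fun p : X * R => (p.1, -1 * p.2 + 1))); split.
- apply: (within_continuous_comp cH (@continuous_reparam (-1) 1)).
  by move=> [x t] /= /andP[t0 t1]; apply/andP; split; lra.
- by move=> x /=; rewrite mulr0 add0r.
- by move=> x /=; rewrite mulr1 addNr.
- by move=> x t /andP[t0 t1] /=; apply: HA; apply/andP; split; lra.
Qed.

Lemma homotopic_in_trans (A : set (cube R)) (f g h : X -> cube R) :
  homotopic_in A f g -> homotopic_in A g h -> homotopic_in A f h.
Proof.
move=> [cf cg [H1 [cH1 H10 H11 HA1]]] [_ ch [H2 [cH2 H20 H21 HA2]]].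
split=> //.
pose H p := if p.2 <= 1/2 then H1 (p.1, 2 * p.2 + 0) else H2 (p.1, 2 * p.2 + -1).
exists H; split.
- have -> : [set p : X * R | 0 <= p.2 <= 1] =
     [set p : X * R | 0 <= p.2 <= 1/2] `|` [set p : X * R | 1/2 <= p.2 <= 1].
    apply/seteqP; split => [[x t]|[x t]] /=.
      move=> /andP[t0 t1]; have [th|th] := lerP t (1/2).
        by left; apply/andP; split.
      by right; apply/andP; split => //; lra.
    by case=> /andP[t0 t1]; apply/andP; split; lra.
  apply: withinU_continuous; try exact: closed_strip.
  + have c1 : {within [set p : X * R | 0 <= p.2 <= 1/2],
        continuous (H1 \o (fun p : X * R => (p.1, 2 * p.2 + 0)))}.
      apply: (within_continuous_comp cH1 (@continuous_reparam 2 0)).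
      by move=> [x t] /= /andP[t0 t1]; apply/andP; split; lra.
    apply: subspace_eq_continuous c1 => -[x t] /[1!inE] /= /andP[_ t1].
    by rewrite /from_subspace /H /= t1.
  + have c2 : {within [set p : X * R | 1/2 <= p.2 <= 1],
        continuous (H2 \o (fun p : X * R => (p.1, 2 * p.2 + -1)))}.
      apply: (within_continuous_comp cH2 (@continuous_reparam 2 (-1))).
      by move=> [x t] /= /andP[t0 t1]; apply/andP; split; lra.
    apply: subspace_eq_continuous c2 => -[x t] /[1!inE] /= /andP[t0 t1].
    rewrite /from_subspace /H /=; case: ifPn => // th.
    have -> : t = 1/2 by apply/eqP; rewrite eq_le th t0.
    have -> : 2 * (1/2) + 0 = (1 : R) by lra.
    have -> : 2 * (1/2) + -1 = (0 : R) by lra.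
    by rewrite H11 H20.
- by move=> x; rewrite /H /= ifT ?mulr0 ?addr0 //; lra.
- move=> x; rewrite /H /= ifF; last by apply/negbTE; rewrite -ltNge; lra.
  by have -> : 2 * 1 + -1 = (1 : R) by lra.
- move=> x t /andP[t0 t1]; rewrite /H /=; case: ifPn => th.
    by apply: HA1; apply/andP; split; lra.
  by rewrite -ltNge in th; apply: HA2; apply/andP; split; lra.
Qed.

Lemma homclass_eq (A : set (cube R)) (f g : X -> cube R) :
  homotopic_in A f g -> homclass A f = homclass A g.
Proof.
move=> fg; apply/seteqP; split => h /= hh.
  exact: homotopic_in_trans (homotopic_in_sym fg) hh.
exact: homotopic_in_trans fg hh.
Qed.

Lemma homclass_eqP (A : set (cube R)) (f g : X -> cube R) :
  cont_into A g -> homclass A f = homclass A g <-> homotopic_in A f g.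
Proof.
move=> cg; split; last exact: homclass_eq.
move=> e; have : homclass A g g by exact: homotopic_in_refl.
by rewrite -e.
Qed.

Lemma pstar_homclass (Yk : nat -> set (cube R)) k (B : set (cube R))
    (f : X -> cube R) :
  B `<=` Yk k -> cont_into B f -> pstar Yk k (homclass B f) = homclass (Yk k) f.
Proof.
move=> BY cf; apply/seteqP; split => h /=.
  by move=> [f' ff' f'h]; apply: homotopic_in_trans (homotopic_in_sub BY ff') f'h.
by move=> fh; exists f => //; exact: homotopic_in_refl.
Qed.

End Homotopy.

Lemma nested_subset (T : Type) (Yk : nat -> set T) :
  (forall k, Yk k.+1 `<=` Yk k) -> forall n m, (n <= m)%N -> Yk m `<=` Yk n.
Proof.
move=> dec n m /subnK <-; elim: (m - n)%N => [|d IH] //=.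
by rewrite addSn; apply: subset_trans (dec _) IH.
Qed.

(* [compact_cover] is only available for pointed spaces. *)
HB.instance Definition _ (R : realType) := isPointed.Build (cube R) (fun _ => 0).

(* The complements of the [Yk n], together with [O], cover the compact [Yk 0]. *)
Lemma nested_compact_eventually_sub (T : ptopologicalType) (Yk : nat -> set T)
    (O : set T) :
  hausdorff_space T -> (forall k, compact (Yk k)) -> (forall k, Yk k.+1 `<=` Yk k) ->
  open O -> \bigcap_k Yk k `<=` O -> exists N, Yk N `<=` O.
Proof.
move=> hT cY dec oO capO.
have := cY 0%N; rewrite (@compact_cover T) => /(_ (option nat) setT
  (fun i => if i is Some n then ~` Yk n else O)) [].
- move=> [n|] _ //; apply: closed_openC; exact: compact_closed.
- move=> x _; have [Ox|nOx] := pselect (O x); first by exists None.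
  have [n nYn] : exists n, ~ Yk n x.
    by apply/existsNP => hall; apply/nOx/capO => n _; exact: hall.
  by exists (Some n).
move=> D _ cov; exists (\max_(i <- finmap.enum_fset D) odflt 0 i)%N => x YNx.
have [[n|] iD] := cov x (nested_subset dec (leq0n _) YNx) => //= nYn.
exfalso; apply/nYn/(nested_subset dec _ YNx).
exact: (@leq_bigmax_seq _ _ _ (fun i => odflt 0 i) (Some n)).
Qed.

Section TreeWalks.
Variables (U : Type) (S : nat -> set U) (r : nat -> U -> U).

Definition level (a : tvtx U) : nat := if a is Some (n, _) then n.+1 else 0%N.

Lemma tadj0_level a b : tadj0 S r a b -> level a = (level b).+1.
Proof.
case: a => [[[|n] x]|] //; case: b => [[m y]|] //=.
by case=> _ -> _ _.
Qed.

Lemma tadj_level a b :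
  tadj S r a b -> level a = (level b).+1 \/ level b = (level a).+1.
Proof. by case=> /tadj0_level; [left|right]. Qed.

Lemma tadj0_tvtx a b : tadj0 S r a b -> is_tvtx S a /\ is_tvtx S b.
Proof.
case: a => [[[|n] x]|] //; case: b => [[m y]|] //=.
by case=> Sx -> _ Sy.
Qed.

Lemma tadj_tvtx a b : tadj S r a b -> is_tvtx S a /\ is_tvtx S b.
Proof. by case=> /tadj0_tvtx []. Qed.

Lemma tadj_sym a b : tadj S r a b -> tadj S r b a.
Proof. by case; [right|left]. Qed.

Lemma twalk_level a b m : twalk S r a b m ->
  [/\ (level a <= level b + m)%N, (level b <= level a + m)%N &
      exists k, (level a + level b + m = 2 * k)%N].
Proof.
elim=> [c|c d e n /tadj_level hcd _ [IH1 IH2 [k IHk]]].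
  by split; [lia | lia | exists (level c); lia].
by case: hcd => hcd; (split; [lia | lia |]); [exists k.+1 | exists k]; lia.
Qed.

Lemma twalk0_eq a b : twalk S r a b 0 -> a = b.
Proof. by move=> h; inversion h. Qed.

Lemma twalk1_tadj a b : twalk S r a b 1 -> tadj S r a b.
Proof. by move=> h; inversion h as [|? c ? ? ac cb]; move/twalk0_eq: cb => <-. Qed.

Lemma twalk_cat a b c m n :
  twalk S r a b m -> twalk S r b c n -> twalk S r a c (m + n).
Proof.
elim=> [//|x y z k hxy _ IH] /IH h; rewrite addSn; exact: twalkS hxy h.
Qed.

Lemma twalk_rev a b m : twalk S r a b m -> twalk S r b a m.
Proof.
elim=> [x|x y z k hxy _ IH]; first exact: twalk0.
rewrite -addn1; apply: twalk_cat IH _; exact: twalkS (tadj_sym hxy) (twalk0 _ _ _).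
Qed.

End TreeWalks.

(* [inf set0 = 0], so a lower bound on [E] only bounds [inf E] when [E] is inhabited. *)
Lemma inf_eq0_or_ge (R : realType) (E : set R) c :
  (forall d, E d -> c <= d) -> inf E = 0 \/ c <= inf E.
Proof.
move=> h; have [[d Ed]|nE] := pselect (E !=set0).
  by right; apply: lb_le_inf; [exists d | move=> y /h].
left; rewrite (_ : E = set0) ?inf0 //.
by apply/seteqP; split => // x Ex; apply: nE; exists x.
Qed.

Section TreeMetric.
Variables (R : realType) (U : Type) (S : nat -> set U) (r : nat -> U -> U).
Local Notation valid := (valid_tpoint (R:=R) S r).
Local Notation PL := (path_lengths (R:=R) S r).
Local Notation dist := (tdist (R:=R) S r).

Definition height (p : tpoint R U) : R :=
  match p with
  | Vx a => (level a)%:R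
  | Ex a b t => (level a)%:R + t * ((level b)%:R - (level a)%:R)
  end.

Lemma tadj_levelR a b : tadj S r a b ->
  (level a)%:R = (level b)%:R + 1 :> R \/ (level b)%:R = (level a)%:R + 1 :> R.
Proof. by case/tadj_level => ->; [left|right]; rewrite -natr1. Qed.

Lemma exit_of_height p u e : valid p -> exit_of p u e ->
  `|height p - (level u)%:R| <= e /\ 0 <= e.
Proof.
case: p => [a|a b t] /=; first by move=> _ [-> ->]; rewrite subrr normr0.
move=> [/tadj_levelR hab /andP[t0 t1]] [] [-> ->]; (split; last by lra);
  rewrite ler_norml; case: hab => ->; apply/andP; split; lra.
Qed.

Lemma twalk_level_dist a b m : twalk S r a b m ->
  `|(level a)%:R - (level b)%:R| <= m%:R :> R.
Proof.
case/twalk_level => h1 h2 _; rewrite ler_norml.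
have h1' : (level a)%:R <= (level b)%:R + m%:R :> R by rewrite -natrD ler_nat.
have h2' : (level b)%:R <= (level a)%:R + m%:R :> R by rewrite -natrD ler_nat.
apply/andP; split; lra.
Qed.

Lemma height_edge_dist a b t s : tadj S r a b ->
  `|height (Ex a b t) - height (Ex a b s)| = `|t - s|.
Proof.
move=> /tadj_levelR hab /=.
have -> : (level a)%:R + t * ((level b)%:R - (level a)%:R) -
    ((level a)%:R + s * ((level b)%:R - (level a)%:R)) =
    (t - s) * ((level b)%:R - (level a)%:R) :> R by ring.
rewrite normrM; case: hab => ->.
  by rewrite opprD addNKr normrN normr1 mulr1.
by rewrite addrAC subrr add0r normr1 mulr1.
Qed.

Lemma height_flip a b t : height (Ex a b t) = height (Ex b a (1 - t)).
Proof. rewrite /=; ring. Qed.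

Lemma valid_flip a b t : valid (Ex a b t) -> valid (Ex b a (1 - t)).
Proof. by move=> [/tadj_sym h /andP[t0 t1]]; split => //; apply/andP; split; lra. Qed.

Lemma path_length_ge_height p q d : valid p -> valid q -> PL p q d ->
  0 <= d /\ `|height p - height q| <= d.
Proof.
move=> vp vq [[u [e1 [w [e2 [m [ep eq wm ->]]]]]]|[a [b [t [s [ep hq]]]]]].
  have [h1 e10] := exit_of_height vp ep.
  have [h2 e20] := exit_of_height vq eq.
  have h3 := twalk_level_dist wm.
  have m0 : 0 <= m%:R :> R by [].
  split; first lra.
  move: h1 h2 h3; rewrite !ler_norml => /andP[h1 h1'] /andP[h2 h2'] /andP[h3 h3'].
  apply/andP; split; lra.
subst p; have [hab _] := vp.
case: hq => -[-> ->]; split => //; [by rewrite height_edge_dist|].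
by rewrite [height (Ex b a s)]height_flip height_edge_dist.
Qed.

Lemma tdist_ge_height p q d : valid p -> valid q -> PL p q d ->
  `|height p - height q| <= dist p q.
Proof.
move=> vp vq h; apply: lb_le_inf; first by exists d.
by move=> y /(path_length_ge_height vp vq) [].
Qed.

Lemma tdist_le_path_length p q d : valid p -> valid q -> PL p q d -> dist p q <= d.
Proof.
move=> vp vq h; apply: (ge_inf (E := PL p q)) h.
by exists 0 => y /(path_length_ge_height vp vq) [].
Qed.

Lemma tdist_ge0 p q : valid p -> valid q -> 0 <= dist p q.
Proof.
move=> vp vq; rewrite /tdist; have := @inf_eq0_or_ge R (PL p q) 0.
by case=> [y /(path_length_ge_height vp vq) []|->|].
Qed.

Lemma path_lengths_refl p : valid p -> PL p p 0.
Proof.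
case: p => [a|a b t] _.
  left; exists a, 0, a, 0, 0%N; split => //; first exact: twalk0.
  by rewrite !add0r.
by right; exists a, b, t, t; split => //; left; rewrite subrr normr0.
Qed.

Lemma tdist_refl p : valid p -> dist p p = 0.
Proof.
move=> vp; apply/eqP; rewrite eq_le tdist_ge0 // andbT.
exact: tdist_le_path_length (path_lengths_refl vp).
Qed.

Lemma path_lengths_sym p q d : PL p q d -> PL q p d.
Proof.
move=> [[u [e1 [w [e2 [m [ep eq wm ->]]]]]]|[a [b [t [s [-> hq]]]]]].
  left; exists w, e2, u, e1, m; split => //; first exact: twalk_rev.
  ring.
right; case: hq => -[-> ->].
  by exists a, b, s, t; split => //; left; split => //; rewrite distrC.
exists b, a, s, t; split => //; right; split => //.
by congr `|_|; ring.
Qed.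

Lemma tdist_sym p q : dist p q = dist q p.
Proof. by rewrite /tdist; congr inf; apply/seteqP; split => d; exact: path_lengths_sym. Qed.

Lemma path_lengths_flip a b t q : PL (Ex a b t) q = PL (Ex b a (1 - t)) q.
Proof.
have flipE (x y : R) : `|x - y| = `|(1 - x) - (1 - y)|.
  by rewrite -normrN; congr `|_|; ring.
have flipE' (x y : R) : `|x - (1 - y)| = `|(1 - x) - y|.
  by rewrite -normrN; congr `|_|; ring.
apply/seteqP; split => d.
  move=> [[u [e1 [w [e2 [m [ep eq wm ->]]]]]]|[a' [b' [t' [s [[ea eb et] hq]]]]]].
    left; exists u, e1, w, e2, m; split => //.
    by case: ep => -[-> ->]; [right|left]; split => //; ring.
  subst a' b' t'; right; exists b, a, (1 - t), s; split => //.
  by case: hq => -[-> ->]; [right; rewrite flipE | left; rewrite flipE'].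
move=> [[u [e1 [w [e2 [m [ep eq wm ->]]]]]]|[a' [b' [t' [s [[ea eb et] hq]]]]]].
  left; exists u, e1, w, e2, m; split => //.
  by case: ep => -[-> ->]; [right|left]; split => //; ring.
subst a' b' t'; right; exists a, b, t, s; split => //.
by case: hq => -[-> ->]; [right; rewrite flipE' | left; rewrite flipE].
Qed.

Lemma tdist_flip a b t q : dist (Ex a b t) q = dist (Ex b a (1 - t)) q.
Proof. by rewrite /tdist path_lengths_flip. Qed.

Lemma path_lengths_vertices a b d : PL (Vx R a) (Vx R b) d ->
  exists m, twalk S r a b m /\ d = m%:R.
Proof.
move=> [[u [e1 [w [e2 [m [[-> ->] [-> ->] wm ->]]]]]]|[? [? [? [? [//]]]]]].
by exists m; rewrite add0r addr0.
Qed.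

Lemma path_lengths_vertex_edge a a' b' s d : PL (Vx R a) (Ex a' b' s) d ->
  exists m, (twalk S r a a' m /\ d = m%:R + s) \/
            (twalk S r a b' m /\ d = m%:R + (1 - s)).
Proof.
move=> [[u [e1 [w [e2 [m [[-> ->] eq wm ->]]]]]]|[? [? [? [? [//]]]]]].
by exists m; case: eq => -[ew ->]; subst w; [left|right]; rewrite add0r.
Qed.

End TreeMetric.

Section Root.
Variables (R : realType) (U : Type) (S : nat -> set U) (r : nat -> U -> U).
Hypothesis r_S : forall n x, S n.+1 x -> S n (r n x).
Local Notation valid := (valid_tpoint (R:=R) S r).
Local Notation PL := (path_lengths (R:=R) S r).
Local Notation dist := (tdist (R:=R) S r).

Lemma twalk_root a : is_tvtx S a -> twalk S r a None (level a).
Proof.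
case: a => [[n x]|] /=; last by move=> _; exact: twalk0.
elim: n x => [|n IH] x Sx; first by apply: twalkS (twalk0 _ _ _); left.
apply: (@twalkS _ _ _ _ (Some (n, r n x))); first by left; split => //; exact: r_S.
exact: IH (r_S Sx).
Qed.

Lemma height_ge0 p : valid p -> 0 <= height p.
Proof.
case: p => [a|a b t] //= [/(@tadj_levelR R) hab /andP[t0 t1]].
have A0 : 0 <= (level a)%:R :> R by [].
have B0 : 0 <= (level b)%:R :> R by [].
by case: hab => ->; lra.
Qed.

Lemma path_lengths_root p : valid p -> PL (troot R U) p (height p).
Proof.
case: p => [a|a b t] /=.
  move=> va; left; exists None, 0, a, 0, (level a); split => //.
    exact/twalk_rev/twalk_root.
  by rewrite add0r addr0.
move=> [hab /andP[t0 t1]]; have [ta tb] := tadj_tvtx hab.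
case: (tadj_level hab) => hl.
  left; exists None, 0, b, (1 - t), (level b); split => //.
  - by right.
  - exact/twalk_rev/twalk_root.
  - by rewrite hl -natr1; ring.
left; exists None, 0, a, t, (level a); split => //.
- by left.
- exact/twalk_rev/twalk_root.
- by rewrite hl -natr1; ring.
Qed.

Lemma tdist_root p : valid p -> dist (troot R U) p = height p.
Proof.
move=> vp; have vr : valid (troot R U) by [].
apply/eqP; rewrite eq_le (tdist_le_path_length vr vp (path_lengths_root vp)) /=.
have := tdist_ge_height vr vp (path_lengths_root vp).
by rewrite /= sub0r normrN ger0_norm //; exact: height_ge0.
Qed.

End Root.

Definition thread_vertex (U : Type) (c : nat -> U) (n : nat) : tvtx U :=
  if n is k.+1 then Some (k, c k) else None.

(* The path through the vertices [thread_vertex c n], parametrised by height. *)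
Definition thread_branch (R : realType) (U : Type) (c : nat -> U) (t : R) :
    tpoint R U :=
  if t == (Num.truncn t)%:R then Vx R (thread_vertex c (Num.truncn t))
  else Ex (thread_vertex c (Num.truncn t)) (thread_vertex c (Num.truncn t).+1)
          (t - (Num.truncn t)%:R).

Lemma thread_branch_nat (R : realType) (U : Type) (c : nat -> U) (n : nat) :
  thread_branch c n%:R = Vx R (thread_vertex c n).
Proof.
have e : Num.truncn (n%:R : R) = n by apply: truncn_def; rewrite lexx ltr_nat ltnSn.
by rewrite /thread_branch e eqxx.
Qed.

Lemma level_thread_vertex (U : Type) (c : nat -> U) n : level (thread_vertex c n) = n.
Proof. by case: n. Qed.

Section ThreadBranch.
Variables (R : realType) (U : Type) (S : nat -> set U) (r : nat -> U -> U).
Local Notation valid := (valid_tpoint (R:=R) S r).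
Local Notation PL := (path_lengths (R:=R) S r).
Local Notation dist := (tdist (R:=R) S r).

Definition is_thread (c : nat -> U) := forall n, S n (c n) /\ c n = r n (c n.+1).

Lemma tdist_vertex_eq0 a b m : twalk S r a b m -> dist (Vx R a) (Vx R b) = 0 -> a = b.
Proof.
move=> w d0; have [//|nab] := pselect (a = b); exfalso.
have H1 : forall d, PL (Vx R a) (Vx R b) d -> 1 <= d.
  move=> d /path_lengths_vertices [k [w' ->]]; rewrite ler1n lt0n.
  by apply: contra_notN nab => /eqP k0; subst k; exact: twalk0_eq w'.
have hm : PL (Vx R a) (Vx R b) m%:R.
  by left; exists a, 0, b, 0, m; split => //; rewrite add0r addr0.
have := lb_le_inf (ex_intro _ _ hm) H1.
by change (1 <= dist (Vx R a) (Vx R b) -> False); rewrite d0; lra.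
Qed.

Variable c : nat -> U.
Hypothesis c_thread : is_thread c.
Local Notation vt := (thread_vertex c).
Local Notation F := (thread_branch (R:=R) c).

Lemma tadj0_thread_vertex n : tadj0 S r (vt n.+1) (vt n).
Proof.
case: n => [|n] /=; first exact: (c_thread 0).1.
by split; [exact: (c_thread _).1 | | exact: (c_thread _).2 | exact: (c_thread _).1].
Qed.

Lemma twalk_thread_vertex i j : (i <= j)%N -> twalk S r (vt j) (vt i) (j - i).
Proof.
move=> /subnK <-; rewrite addnK; elim: (j - i)%N => [|d IH]; first exact: twalk0.
by rewrite addSn; apply: twalkS IH; left; exact: tadj0_thread_vertex.
Qed.

Lemma is_tvtx_thread_vertex n : is_tvtx S (vt n).
Proof. by case: n => //= n; exact: (c_thread n).1. Qed.

Lemma valid_thread_branch t : 0 <= t -> valid (F t).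
Proof.
move=> t0; rewrite /thread_branch; case: ifPn => [_|nt]; first exact: is_tvtx_thread_vertex.
have /andP[h1 h2] := truncn_itv t0.
split; first by right; exact: tadj0_thread_vertex.
rewrite subr_gt0 lt_neqAle h1 andbT eq_sym nt /=.
by rewrite -natr1 in h2; lra.
Qed.

Lemma height_thread_branch t : height (F t) = t.
Proof.
rewrite /thread_branch; case: ifPn => [/eqP e|nt] /=; rewrite !level_thread_vertex.
  exact/esym.
by rewrite -natr1; ring.
Qed.

(* The point [F s] leaves its cell upwards through the vertex of level
   [Num.truncn s] or [Num.truncn s + 1], and then climbs the thread to [F t]. *)
Lemma path_lengths_thread_branch s t : 0 <= s -> s <= t -> PL (F s) (F t) (t - s).
Proof.
move=> s0 st; have t0 : 0 <= t by lra.
rewrite /thread_branch; have := truncn_itv s0; have := truncn_itv t0.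
move: (Num.truncn s) (Num.truncn t) => ns nt /andP[ht1 ht2] /andP[hs1 hs2].
have nsnt : (ns <= nt)%N.
  rewrite leqNgt; apply/negP => h.
  have : nt.+1%:R <= ns%:R :> R by rewrite ler_nat.
  lra.
have [ens|lns] := eqVneq ns nt.
  subst nt; case: ifPn => [/eqP es|nes]; case: ifPn => [/eqP et|net].
  - left; exists (vt ns), 0, (vt ns), 0, 0%N; split => //; first exact: twalk0.
    by rewrite es et subrr !add0r.
  - left; exists (vt ns), 0, (vt ns), (t - ns%:R), 0%N; split => //.
    + by left.
    + exact: twalk0.
    + by rewrite es; ring.
  - by exfalso; rewrite neq_lt in nes; case/orP: nes; lra.
  - right; exists (vt ns), (vt ns.+1), (s - ns%:R), (t - ns%:R); split => //.
    by left; split => //; rewrite ler0_norm; [ring | lra].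
have lt : (ns < nt)%N by rewrite ltn_neqAle lns nsnt.
have [a [ea ha]] : exists a, exit_of (if s == ns%:R then Vx R (vt ns)
      else Ex (vt ns) (vt ns.+1) (s - ns%:R)) (vt a) (a%:R - s) /\ (a <= nt)%N.
  case: ifPn => [/eqP es|nes].
    by exists ns; split; [split => //; rewrite es subrr|exact: ltnW].
  by exists ns.+1; split => //; right; split => //; rewrite -natr1; ring.
have eb : exit_of (if t == nt%:R then Vx R (vt nt)
      else Ex (vt nt) (vt nt.+1) (t - nt%:R)) (vt nt) (t - nt%:R).
  by case: ifPn => [/eqP et|net]; [split => //; rewrite et subrr | left].
left; exists (vt a), (a%:R - s), (vt nt), (t - nt%:R), (nt - a)%N; split => //.
  exact/twalk_rev/twalk_thread_vertex.
rewrite natrB //; ring.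
Qed.

Lemma tdist_thread_branch s t : 0 <= s -> 0 <= t -> dist (F s) (F t) = `|s - t|.
Proof.
wlog st : s t / s <= t.
  move=> h s0 t0; have [/h|/ltW ts] := leP s t; first by apply.
  by rewrite tdist_sym distrC; apply: h.
move=> s0 t0; have hp := path_lengths_thread_branch s0 st.
have vs := valid_thread_branch s0; have vt' := valid_thread_branch t0.
apply/eqP; rewrite eq_le; apply/andP; split.
  by rewrite distrC ger0_norm ?subr_ge0 //; exact: tdist_le_path_length hp.
by have := tdist_ge_height vs vt' hp; rewrite !height_thread_branch.
Qed.

Lemma thread_branch_geodesic : geod_complete_branch S r F.
Proof.
split; [exact: valid_thread_branch | | exact: tdist_thread_branch].
by rewrite /thread_branch truncn0 eqxx.
Qed.

End ThreadBranch.

Lemma thread_branch_eqP (R : realType) (U : Type) (S : nat -> set U)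
    (r : nat -> U -> U) (c c' : nat -> U) :
  is_thread S r c -> is_thread S r c' ->
  branch_eq S r (thread_branch (R:=R) c) (thread_branch c') <-> c = c'.
Proof.
move=> hc hc'; split => [be|<- t t0]; last exact/tdist_refl/valid_thread_branch.
apply/funext => n; have := be n.+1%:R (ler0n _ _); rewrite !thread_branch_nat.
have w := twalk_cat (twalk_thread_vertex hc (leq0n n.+1))
  (twalk_rev (twalk_thread_vertex hc' (leq0n n.+1))).
by move=> /(tdist_vertex_eq0 w) [].
Qed.

Section Rigidity.
Variables (R : realType) (U : Type) (S : nat -> set U) (r : nat -> U -> U).
Local Notation PL := (path_lengths (R:=R) S r).
Local Notation dist := (tdist (R:=R) S r).

Lemma twalk_ge2 a b m : twalk S r a b m -> a <> b -> level a = level b -> (2 <= m)%N.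
Proof.
move=> w nab e; have [h1 h2 [k hk]] := twalk_level w.
by case: m w h1 h2 hk => [/twalk0_eq //|[|m]] w h1 h2 hk //; lia.
Qed.

Lemma twalk_ge1 a b m : twalk S r a b m -> level b = (level a).+1 -> (1 <= m)%N.
Proof. by move=> w e; have [h1 h2 _] := twalk_level w; lia. Qed.

(* Parity: a walk between consecutive levels that is not an edge has length at least 3. *)
Lemma tadj0_of_tdist1 a b : level b = (level a).+1 ->
  dist (Vx R a) (Vx R b) = 1 -> tadj0 S r b a.
Proof.
move=> el d1; have [//|nadj] := pselect (tadj0 S r b a); exfalso.
have H3 : forall d, PL (Vx R a) (Vx R b) d -> 3 <= d.
  move=> d /path_lengths_vertices [m [w ->]].
  have [h1 h2 [k hk]] := twalk_level w.
  have m1 : m <> 1%N.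
    move=> em; subst m; case: (twalk1_tadj w) => h; last exact: nadj.
    by have := tadj0_level h; lia.
  have : (3 <= m)%N by lia.
  by rewrite -(ler_nat R).
have := inf_eq0_or_ge H3; rewrite -/(tdist S r _ _) d1.
by case=> [/eqP|]; [rewrite oner_eq0 | lra].
Qed.

Lemma edge_end_of_tdist_lower x a b s :
  level a = level x -> level b = (level x).+1 -> 0 < s < 1 ->
  dist (Vx R x) (Ex a b s) = s -> x = a.
Proof.
move=> ea eb /andP[s0 s1] ds; have [//|nxa] := pselect (x = a); exfalso.
have H2 : forall d, PL (Vx R x) (Ex a b s) d -> 2 - s <= d.
  move=> d /path_lengths_vertex_edge [m [[w ->]|[w ->]]].
    have : (2 <= m)%N by apply: twalk_ge2 w nxa _.
    by rewrite -(ler_nat R) => h; lra.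
  have : (1 <= m)%N by apply: twalk_ge1 w _; rewrite eb.
  by rewrite -(ler_nat R) => h; lra.
by have := inf_eq0_or_ge H2; rewrite -/(tdist S r _ _) ds; lra.
Qed.

Lemma edge_end_of_tdist_upper x a b s :
  level b = (level a).+1 -> level x = level b -> 0 < s < 1 ->
  dist (Vx R x) (Ex a b s) = 1 - s -> x = b.
Proof.
move=> ea eb /andP[s0 s1] ds; have [//|nxb] := pselect (x = b); exfalso.
have H2 : forall d, PL (Vx R x) (Ex a b s) d -> 1 + s <= d.
  move=> d /path_lengths_vertex_edge [m [[w ->]|[w ->]]].
    have : (1 <= m)%N by apply: twalk_ge1 (twalk_rev w) _; lia.
    by rewrite -(ler_nat R) => h; lra.
  have : (2 <= m)%N by apply: twalk_ge2 w nxb _.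
  by rewrite -(ler_nat R) => h; lra.
by have := inf_eq0_or_ge H2; rewrite -/(tdist S r _ _) ds; lra.
Qed.

Lemma edge_orient a b s : valid_tpoint S r (Ex a b s) ->
  exists a' b' s', [/\ valid_tpoint S r (Ex a' b' s'), level b' = (level a').+1,
    height (Ex a' b' s') = height (Ex a b s) &
    forall q, dist q (Ex a b s) = dist q (Ex a' b' s')].
Proof.
move=> v; have [hab _] := v; case: (tadj_level hab) => e; last by exists a, b, s.
exists b, a, (1 - s); split => //.
- exact: valid_flip.
- by rewrite -height_flip.
- by move=> q; rewrite tdist_sym tdist_flip tdist_sym.
Qed.

End Rigidity.

Lemma natr_add_fraction_neq (R : realType) (m n : nat) (s : R) :
  0 < s < 1 -> m%:R + s <> n%:R.
Proof.
move=> /andP[s0 s1] e; case: (ltngtP m n) => h.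
- have : m.+1%:R <= n%:R :> R by rewrite ler_nat.
  rewrite -natr1; lra.
- have : n%:R < m%:R :> R by rewrite ltr_nat.
  lra.
- subst n; lra.
Qed.

Section BranchThread.
Variables (R : realType) (U : Type) (S : nat -> set U) (r : nat -> U -> U).
Hypothesis r_S : forall n x, S n.+1 x -> S n (r n x).
Variable F : R -> tpoint R U.
Hypothesis F_geod : geod_complete_branch S r F.

Lemma height_branch t : 0 <= t -> height (F t) = t.
Proof.
move=> t0; case: F_geod => vF F0 dF.
by rewrite -(tdist_root r_S (vF t t0)) -F0 dF ?lexx // sub0r normrN ger0_norm.
Qed.

Lemma branch_nat n : exists a, [/\ F n%:R = Vx R a, level a = n & is_tvtx S a].
Proof.
case: F_geod => vF _ _.
have := height_branch (ler0n R n); have := vF n%:R (ler0n R n).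
case: (F n%:R) => [a|a b s] /= v h.
  by exists a; split => //; apply/eqP; rewrite -(eqr_nat R) h.
exfalso; case: v => /(@tadj_levelR R) hab s01.
case: hab => e; rewrite e in h.
  apply: (@natr_add_fraction_neq R (level b) n (1 - s)).
    by move: s01 => /andP[? ?]; apply/andP; split; lra.
  by rewrite -h; ring.
by apply: (natr_add_fraction_neq (m := level a) (n := n) s01); rewrite -h; ring.
Qed.

Lemma branch_vertices :
  exists2 c, is_thread S r c & forall n, F n%:R = Vx R (thread_vertex c n).
Proof.
have [vF _ dF] := F_geod; have /choice [w hw] := branch_nat.
have w0 : w 0%N = None by have [_ ] := hw 0%N; case: (w 0%N) => [[? ?]|].
have /choice [c hc] : forall n, exists x, w n.+1 = Some (n, x).
  move=> n; have [_ ] := hw n.+1.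
  by case: (w n.+1) => [[m x]|] //= [->]; exists x.
have w_vt n : w n = thread_vertex c n by case: n => [|n] //=; rewrite hc.
have adjw n : tadj0 S r (w n.+1) (w n).
  have [e1 l1 _] := hw n; have [e2 l2 _] := hw n.+1.
  apply: (@tadj0_of_tdist1 R); first by rewrite l1 l2.
  by rewrite -e1 -e2 dF // distrC -natr1 addrC addKr ger0_norm.
exists c => [n|n]; last by have [] := hw n; rewrite w_vt.
have [_ _] := hw n.+1; rewrite hc => Scn; split => //.
by have := adjw n.+1; rewrite !hc => -[_ _ ->].
Qed.

(* Between the integer heights [n] and [n + 1] the branch runs along the
   edge joining its vertices at these heights. *)
Lemma branch_eq_thread_branch c : is_thread S r c ->
  (forall n, F n%:R = Vx R (thread_vertex c n)) -> branch_eq S r (thread_branch c) F.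
Proof.
move=> hc Fc t t0; have [vF _ dF] := F_geod.
have /andP[hn1 hn2] := truncn_itv t0.
rewrite /thread_branch; move: hn1 hn2; set n := Num.truncn t => hn1 hn2.
case: ifPn => [/eqP et|net]; first by rewrite -Fc -et; exact: tdist_refl (vF t t0).
have ht := height_branch t0; have v := vF t t0.
case E : (F t) v ht => [a|a b s] v ht.
  have en : n = level a by apply: truncn_def; rewrite -ht /= lexx ltr_nat ltnSn.
  by move: net; rewrite en -ht /= eqxx.
have [a' [b' [s' [v' eb' hg dE]]]] := edge_orient v.
rewrite -hg /= eb' -natr1 in ht.
have {}ht : (level a')%:R + s' = t by rewrite -ht; ring.
have s'01 : 0 < s' < 1 by case: v'.
have ha' : n = level a'.
  apply: truncn_def; rewrite -natr1; move: s'01 => /andP[? ?]; apply/andP; split; lra.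
have ea : thread_vertex c n = a'.
  apply: (edge_end_of_tdist_lower (S := S) (r := r) (b := b') (s := s'));
    rewrite ?level_thread_vertex //.
    by rewrite eb' ha'.
  by rewrite -Fc -dE -E dF // distrC ger0_norm ?subr_ge0 // ha'; lra.
have eb : thread_vertex c n.+1 = b'.
  apply: (edge_end_of_tdist_upper (S := S) (r := r) (a := a') (s := s'));
    rewrite ?level_thread_vertex ?eb' //.
    by rewrite -ha'.
  rewrite -Fc -dE -E dF // ger0_norm; last by rewrite subr_ge0 ltW.
  by rewrite -natr1 ha'; lra.
rewrite ea eb dE (_ : t - n%:R = s'); last by rewrite ha'; lra.
exact: tdist_refl.
Qed.

Lemma branch_thread :
  exists2 c, is_thread S r c & branch_eq S r (thread_branch c) F.
Proof.
have [c hc Fc] := branch_vertices.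
by exists c => //; exact: branch_eq_thread_branch.
Qed.

End BranchThread.

Lemma homotopic_in_tail (R : realType) (X : topologicalType) (A : set (cube R))
    (f : nat -> X -> cube R) m :
  (forall t, (m <= t)%N -> homotopic_in A (f t.+1) (f t)) ->
  forall s, (m <= s)%N -> homotopic_in A (f s) (f m).
Proof.
move=> h; have cm : cont_into A (f m) by case: (h m (leqnn m)).
elim=> [|s IH]; first by rewrite leqn0 => /eqP e; subst m; exact: homotopic_in_refl.
rewrite leq_eqVlt => /orP[/eqP <-|ms]; first exact: homotopic_in_refl cm.
exact: homotopic_in_trans (h s ms) (IH ms).
Qed.

Section ApproximativeMaps.
Variables (R : realType) (X : topologicalType) (Yk : nat -> set (cube R)).
Hypothesis Yk_nested : forall k, Yk k.+1 `<=` Yk k.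
Implicit Types f g : nat -> X -> cube R.

Definition approx_index f N :=
  xget 0%N [set m | forall t, (m <= t)%N -> homotopic_in (Yk N) (f t.+1) (f t)].

Lemma approx_indexP f N t : approximative Yk f -> (approx_index f N <= t)%N ->
  homotopic_in (Yk N) (f t.+1) (f t).
Proof. by move=> [_ fa]; move: t; apply: (xgetPex 0%N (fa N)). Qed.

(* From this index on, all [f t] lie in one class of [X, Yk N], and it
   increases with [N] *)
Fixpoint stable_index f N : nat :=
  if N is M.+1 then maxn (stable_index f M) (maxn N (approx_index f N))
  else approx_index f 0.

Lemma approx_index_le_stable f N : (approx_index f N <= stable_index f N)%N.
Proof. by case: N => //= N; lia. Qed.

Lemma le_stable_index f N : (N <= stable_index f N)%N.
Proof. by case: N => //= N; lia. Qed.

Lemma stable_index_mono f N : (stable_index f N <= stable_index f N.+1)%N.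
Proof. by rewrite /= leq_maxl. Qed.

Definition approx_class f N := homclass (Yk N) (f (stable_index f N)).

Lemma cont_into_approx f N t : approximative Yk f -> (N <= t)%N -> cont_into (Yk N) (f t).
Proof. by move=> [fY _] Nt; exact: cont_into_sub (nested_subset Yk_nested Nt) (fY t). Qed.

Lemma approx_classE f N t : approximative Yk f -> (stable_index f N <= t)%N ->
  approx_class f N = homclass (Yk N) (f t).
Proof.
move=> fa st; apply/homclass_eq/homotopic_in_sym; move: t st; apply: homotopic_in_tail.
move=> t; have := approx_index_le_stable f N; move=> h1 h2.
exact: approx_indexP fa (leq_trans h1 h2).
Qed.

Lemma approx_class_thread f : approximative Yk f ->
  is_thread (hclasses Yk) (pstar Yk) (approx_class f).
Proof.
move=> fa N; split; first by exists (f (stable_index f N)); split => //;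
  apply: cont_into_approx fa (le_stable_index f N).
rewrite /approx_class pstar_homclass //; last exact: cont_into_approx (le_stable_index _ _).
by apply: approx_classE fa _; exact: stable_index_mono.
Qed.

Lemma pstar_hclasses N c :
  hclasses (X:=X) Yk N.+1 c -> hclasses Yk N (pstar Yk N c).
Proof.
move=> [f [cf ->]]; exists f; split; first exact: cont_into_sub cf.
exact: pstar_homclass cf.
Qed.

Lemma thread_realized c : is_thread (hclasses Yk) (pstar Yk) c ->
  exists2 f, approximative Yk f & approx_class f = c.
Proof.
move=> hc; have /choice [f hf] :
    forall N, exists h, cont_into (Yk N) h /\ c N = homclass (Yk N) h.
  by move=> N; have [[h [ch ->]] _] := hc N; exists h.
have step t : homotopic_in (Yk t) (f t.+1) (f t).
  have cYt := cont_into_sub (@Yk_nested t) (hf t.+1).1.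
  have := (hc t).2; rewrite (hf t).2 (hf t.+1).2 pstar_homclass //; last exact: (hf t.+1).1.
  by move/(homclass_eqP _ cYt); exact: homotopic_in_sym.
have tail N t : (N <= t)%N -> homotopic_in (Yk N) (f t.+1) (f t).
  by move=> Nt; exact: homotopic_in_sub (nested_subset Yk_nested Nt) (step t).
have fa : approximative Yk f by split=> [k | N]; [exact: (hf k).1 | exists N; exact: tail].
exists f => //; apply/funext => N; rewrite /approx_class (hf N).2.
by apply/homclass_eq/(homotopic_in_tail (tail N)); exact: le_stable_index.
Qed.

Section Shape.
Variable Y : set (cube R).
Hypothesis Yk_nbhd : forall k, nbhd_in_cube Y (Yk k).
Hypothesis Yk_compact : forall k, compact (Yk k).
Hypothesis Yk_cap : \bigcap_k Yk k = Y.

Lemma nbhd_in_cube_contains_Yk V : nbhd_in_cube Y V -> exists N, Yk N `<=` V.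
Proof.
move=> [_ [Op [oOp YOp OpV]]].
have hC : hausdorff_space (cube R).
  by apply: hausdorff_product => _; exact: Rhausdorff.
have capOp : \bigcap_k Yk k `<=` Op by rewrite Yk_cap => y /YOp [].
have [N YNOp] := nested_compact_eventually_sub hC Yk_compact Yk_nested oOp capOp.
exists N => x YNx; apply: OpV; split; first exact: YNOp.
exact: (Yk_nbhd N).1.
Qed.

Lemma approx_homotopic_classP f g : approximative Yk f -> approximative Yk g ->
  approx_homotopic Y f g <-> approx_class f = approx_class g.
Proof.
move=> fa ga; split => [fg | fg V /nbhd_in_cube_contains_Yk [N YNV]].
  apply/funext => N; have [k0 hk0] := fg _ (Yk_nbhd N).
  pose k := maxn k0 (maxn (stable_index f N) (stable_index g N)).
  rewrite (approx_classE (t := k) fa) ?(approx_classE (t := k) ga); try lia.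
  by apply/homclass_eq/hk0; lia.
exists (maxn (stable_index f N) (stable_index g N)) => k Nk.
apply: homotopic_in_sub YNV _; apply/homclass_eqP.
  by apply: cont_into_approx ga _; have := le_stable_index g N; lia.
have := congr1 (fun c => c N) fg => /=.
by rewrite (approx_classE (t := k) fa) ?(approx_classE (t := k) ga) //; lia.
Qed.
End Shape.
End ApproximativeMaps.

Unset Implicit Arguments.
Set Strict Implicit.

Theorem proposition9p2 (R : realType) (X : pseudoMetricType R)
  (Y : set (cube R)) (Yk : nat -> set (cube R)) :
  hausdorff_space X -> compact [set: X] ->
  compact Y -> Y `<=` @hilbert_cube R ->
  (forall k, [/\ compact (Yk k), is_prism (Yk k) & nbhd_in_cube Y (Yk k)]) ->
  (forall k, Yk k.+1 `<=` Yk k) ->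
  \bigcap_k Yk k = Y ->
  exists Phi : (nat -> X -> cube R) -> R -> tpoint R (set (X -> cube R)),
    [/\ (forall f, approximative Yk f ->
           geod_complete_branch (hclasses Yk) (pstar Yk) (Phi f)),
        (forall f g, approximative Yk f -> approximative Yk g ->
           (approx_homotopic Y f g <->
            branch_eq (hclasses Yk) (pstar Yk) (Phi f) (Phi g))) &
        (forall F, geod_complete_branch (hclasses Yk) (pstar Yk) F ->
           exists2 f, approximative Yk f &
             branch_eq (hclasses Yk) (pstar Yk) (Phi f) F)].
Proof.
move=> _ _ _ _ hYk Yk_nested Yk_cap.
have Yk_compact k : compact (Yk k) by have [] := hYk k.
have Yk_nbhd k : nbhd_in_cube Y (Yk k) by have [] := hYk k.
exists (fun f => thread_branch (approx_class Yk f)); split.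
- by move=> f fa; apply/thread_branch_geodesic/approx_class_thread.
- move=> f g fa ga.
  apply: iff_trans (approx_homotopic_classP Yk_nested Yk_nbhd Yk_compact Yk_cap fa ga) _.
  by apply: iff_sym; apply: thread_branch_eqP; exact: approx_class_thread.
- move=> F /(branch_thread (pstar_hclasses Yk_nested)) [c].
  by move=> /(thread_realized Yk_nested) [f fa <-]; exists f.
Qed.
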